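(* Let $H$, $d$, $(X,\mu)$, $\mathcal{A}$, $(N_s)$, $\delta_r,s_r,\sigma_s$ be as in the context and fix an integer $r\ge3$. Fix $0\le\alpha<\beta$ and an integer $s>s_r+r$. Then for any partition $\mathcal{Q}$ of $[r]$, any $\underline h\in\Delta_{\mathcal{Q}}(\alpha,\beta)$, any $f\in\mathcal{A}$ and any $\mathcal{P}\in\mathfrak{P}_{[r]}$, $$|\widetilde\psi_{f,\underline h}(\mathcal{P})-\widetilde\psi^{\mathcal{Q}}_{f,\underline h}(\mathcal{P})|\le C_{r,s}\,e^{-(\beta\delta_r-r\alpha\sigma_s)}N_s(f)^r,$$ where $C_{r,s}$ depends only on $r$ and $s$.
   Context: $H$ is a locally compact second countable group with left-invariant metric $d$, acting measure-preservingly on a probability space $(X,\mu)$; $h\cdot f=f\circ h^{-1}$. $\mathcal{A}\subset L^\infty(X,\mu)$ is an $H$-invariant subalgebra and $(N_s)_{s\ge1}$ seminorms on it with (constants depending only on $s$): $N_s(f)\ll N_{s+1}(f)$; $\|f\|_{L^\infty}\ll N_s(f)$; $N_s(h\cdot f)\ll e^{\sigma_s d(h,e)}N_s(f)$ for some $\sigma_s>0$; $N_s(f_1f_2)\ll N_{s+1}(f_1)N_{s+1}(f_2)$. Exponential mixing of all orders: for every $k\ge2$ there are $\delta_k>0$ and an integer $s_k>0$ with $\big|\mu(\prod_{i=1}^k h_i\cdot f_i)-\prod_i\mu(f_i)\big|\ll_{k,s}e^{-\delta_k\min_{i\ne j}d(h_i,h_j)}\prod_iN_s(f_i)$ for all $s>s_k$,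 $f_i\in\mathcal{A}$, $h_i\in H$; $(\sigma_s)$, $(s_k)$ increasing, $(\delta_k)$ decreasing, $\delta_k<k\sigma_s$. Distances: $d^I(\underline h)=\max_{i,j\in I}d(h_i,h_j)$, $d_{I,J}(\underline h)=\min_{i\in I,j\in J}d(h_i,h_j)$, $d^{\mathcal{Q}}=\max_{I\in\mathcal{Q}}d^I$, $d_{\mathcal{Q}}=\min\{d_{I,J}:I\ne J\in\mathcal{Q}\}$, $\Delta_{\mathcal{Q}}(\alpha,\beta)=\{\underline h\in H^r:d^{\mathcal{Q}}(\underline h)\le\alpha,\ d_{\mathcal{Q}}(\underline h)>\beta\}$. $\mathfrak{P}_{[r]}$ is the set of cyclically ordered partitions of $[r]$ (partitions into non-empty blocks with a cyclic order on blocks). For $f\in\mathcal{A}$, $\underline h\in H^r$: $\psi_{f,\underline h}(I)=\mu(\prod_{i\in I}h_i\cdot f)$ for $I\ne\emptyset$, $\psi_{f,\underline h}(\emptyset)=1$; $\psi^{\mathcal{Q}}(I)=\prod_{J\in\mathcal{Q}}\psi(I\cap J)$; $\widetilde\psi(\mathcal{P})=\prod_{I\in\mathcal{P}}\psi(I)$, $\widetilde\psi^{\mathcal{Q}}(\mathcal{P})=\prod_{I\in\mathcal{P}}\psi^{\mathcal{Q}}(I)$. *)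

From mathcomp Require Import all_boot all_order all_algebra.
From mathcomp Require Import all_classical all_reals all_analysis.
Set Implicit Arguments.
Unset Strict Implicit.
Unset Printing Implicit Defensive.
Import Order.TTheory GRing.Theory Num.Theory.
Local Open Scope classical_set_scope.
Local Open Scope ring_scope.

Section Defs.
Variable R : realType.

Section Metric.
Variable G : groupType.

Definition is_metric (d : G -> G -> R) : Prop :=
  [/\ forall x y, 0 <= d x y,
      forall x y, d x y = 0 <-> x = y,
      forall x y, d x y = d y x &
      forall x y z, d x z <= d x y + d y z].

Definition left_invariant (d : G -> G -> R) : Prop :=
  forall g x y, d (g * x)%g (g * y)%g = d x y.

(* min_{i <> j} d(h_i, h_j) for k+2 >= 2 points (the default value
   d(h_0, h_{k+1}) is itself one of the values minimized over) *)
Definition mindist (d : G -> G -> R) (k : nat) (h : 'I_k.+2 -> G) : R :=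
  \big[Num.min/d (h ord0) (h ord_max)]_(p : 'I_k.+2 * 'I_k.+2 | p.1 != p.2)
     d (h p.1) (h p.2).

(* Delta_Q(alpha, beta): d^Q(h) <= alpha and d_Q(h) > beta, with the max/min
   over the finitely many pairs written out *)
Definition in_Delta (d : G -> G -> R) (r : nat) (Q : {set {set 'I_r}})
    (alpha beta : R) (h : 'I_r -> G) : Prop :=
  (forall I, I \in Q -> forall i j, i \in I -> j \in I -> d (h i) (h j) <= alpha)
  /\ (forall I J, I \in Q -> J \in Q -> I != J ->
        forall i j, i \in I -> j \in J -> beta < d (h i) (h j)).
End Metric.

Section Action.
Variables (G : groupType) (dX : measure_display) (X : measurableType dX).
Variable (P : probability X R).
Variable (act : G -> X -> X).

Definition mp_action : Prop :=
  [/\ act 1%g = id,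
      forall g h, act (g * h)%g = act g \o act h,
      forall g, measurable_fun setT (act g) &
      forall g (B : set X), measurable B -> P (act g @^-1` B) = P B].

Definition hact (h : G) (f : X -> R) : X -> R := fun x => f (act (h^-1)%g x).

Definition mu (f : X -> R) : R := fine (\int[P]_x (f x)%:E).

Definition is_Linfty (f : X -> R) : Prop :=
  measurable_fun setT f /\ exists M : R, {ae P, forall x, `|f x| <= M}.

Definition inv_subalgebra (A : set (X -> R)) : Prop :=
  [/\ forall f, A f -> is_Linfty f,
      forall f g, A f -> A g -> A (f \+ g),
      forall (c : R) f, A f -> A (fun x => c * f x),
      forall f g, A f -> A g -> A (f \* g) &
      forall h f, A f -> A (hact h f)].

Definition good_seminorms (d : G -> G -> R) (A : set (X -> R))
    (N : nat -> (X -> R) -> R) (sigma : nat -> R) : Prop :=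
  forall s, (1 <= s)%N ->
  [/\
      (forall f g, A f -> A g -> N s (f \+ g) <= N s f + N s g) /\
      (forall (c : R) f, A f -> N s (fun x => c * f x) = `|c| * N s f),
      (exists C : R, forall f, A f -> N s f <= C * N s.+1 f),
      (exists C : R, forall f, A f -> {ae P, forall x, `|f x| <= C * N s f}),
      0 < sigma s /\
      (exists C : R, forall h f, A f ->
          N s (hact h f) <= C * expR (sigma s * d h 1%g) * N s f) &
      (exists C : R, forall f1 f2, A f1 -> A f2 ->
          N s (f1 \* f2) <= C * N s.+1 f1 * N s.+1 f2)].

Definition exp_mixing_all_orders (d : G -> G -> R) (A : set (X -> R))
    (N : nat -> (X -> R) -> R) (delta : nat -> R) (sk : nat -> nat) : Prop :=
  forall k : nat,
  [/\ 0 < delta k.+2, (0 < sk k.+2)%N &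
      forall s, (sk k.+2 < s)%N ->
      exists C : R, forall (f : 'I_k.+2 -> X -> R) (h : 'I_k.+2 -> G),
        (forall i, A (f i)) ->
        `| mu (fun x => \prod_(i < k.+2) hact (h i) (f i) x)
           - \prod_(i < k.+2) mu (f i) |
        <= C * expR (- (delta k.+2 * mindist d h)) * \prod_(i < k.+2) N s (f i)].

Definition constants_ok (delta : nat -> R) (sk : nat -> nat) (sigma : nat -> R) : Prop :=
  [/\ (forall s, (1 <= s)%N -> sigma s <= sigma s.+1),
      (forall k, (2 <= k)%N -> (sk k <= sk k.+1)%N),
      (forall k, (2 <= k)%N -> delta k.+1 <= delta k) &
      (forall k s, (2 <= k)%N -> (1 <= s)%N -> delta k < k%:R * sigma s)].

Variable r : nat.

Definition psi (f : X -> R) (h : 'I_r -> G) (I : {set 'I_r}) : R :=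
  if I == finset.set0 then 1 else mu (fun x => \prod_(i in I) hact (h i) f x).

Definition psiQ (Q : {set {set 'I_r}}) (f : X -> R) (h : 'I_r -> G)
    (I : {set 'I_r}) : R :=
  \prod_(J in Q) psi f h (I :&: J).

(* A cyclically ordered partition of [r] is represented by a list of its
   blocks (read cyclically, up to rotation): distinct blocks forming a
   partition (non-empty, disjoint, covering) of 'I_r. *)
Definition cyc_ord_partition (Ps : seq {set 'I_r}) : bool :=
  uniq Ps && finset.partition [set I in Ps] [set: 'I_r].

Definition psit (f : X -> R) (h : 'I_r -> G) (Ps : seq {set 'I_r}) : R :=
  \prod_(I <- Ps) psi f h I.

Definition psitQ (Q : {set {set 'I_r}}) (f : X -> R) (h : 'I_r -> G)
    (Ps : seq {set 'I_r}) : R :=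
  \prod_(I <- Ps) psiQ Q f h I.
End Action.
End Defs.

From mathcomp Require Import all_boot all_order all_algebra.
From mathcomp Require Import all_classical all_reals all_analysis.
From mathcomp Require Import measurable_realfun ring lra zify.
Import Order.TTheory GRing.Theory Num.Theory.
Set Implicit Arguments.
Unset Strict Implicit.
Unset Printing Implicit Defensive.
Local Open Scope ring_scope.

(* Group the factors of psi(I) by the blocks of Q that I meets.  If I meets at
   most one block, psi(I) = psi^Q(I).  Otherwise pick a point h_j of I in each
   such block and write that group of factors as h_j . F with F the product of the
   (h_j^-1 h_i) . f: as the group has diameter at most alpha, N_{s-r}(F) is
   << (e^{sigma_s alpha} N_s f)^{#group}, and as the chosen points are more than
   beta apart, mixing of order at most r gives
   |psi(I) - psi^Q(I)| << e^{-beta delta_r} (e^{sigma_s alpha} N_s f)^{#I}.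
   Since also |psi(I)|, |psi^Q(I)| << N_s(f)^{#I}, telescoping the products over
   the blocks of P gives the claim, the exponents #I adding up to r. *)

Section BigPartition.
Variables (T : finType) (Q : {set {set T}}).
Hypothesis partQ : finset.partition Q [set: T].

Definition meeting_blocks (I : {set T}) : {set {set T}} :=
  [set J in Q | I :&: J != finset.set0].

Lemma big_setI_partition (V : Type) (idx : V) (op : Monoid.com_law idx)
    (I : {set T}) (F : T -> V) :
  \big[op/idx]_(i in I) F i = \big[op/idx]_(J in Q) \big[op/idx]_(i in I :&: J) F i.
Proof.
rewrite (eq_bigl (fun i => (i \in [set: T]) && (i \in I))) => [|i]; last by rewrite finset.in_setT.
rewrite (set_partition_big_cond _ partQ); apply: eq_bigr => J _.
by apply: eq_bigl => i; rewrite finset.in_setI andbC.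
Qed.

Lemma big_meeting_blocks (V : Type) (idx : V) (op : Monoid.com_law idx)
    (I : {set T}) (F : {set T} -> V) :
  F finset.set0 = idx ->
  \big[op/idx]_(J in Q) F (I :&: J) = \big[op/idx]_(J in meeting_blocks I) F (I :&: J).
Proof.
move=> F0; rewrite big_mkcond [RHS]big_mkcond; apply: eq_bigr => J _.
by rewrite inE; case: (J \in Q); case: eqP => // ->.
Qed.

Lemma big_setI_meeting_blocks (V : Type) (idx : V) (op : Monoid.com_law idx)
    (I : {set T}) (F : T -> V) :
  \big[op/idx]_(i in I) F i =
  \big[op/idx]_(J in meeting_blocks I) \big[op/idx]_(i in I :&: J) F i.
Proof.
rewrite big_setI_partition.
by rewrite (@big_meeting_blocks _ _ _ I (fun S => \big[op/idx]_(i in S) F i)) ?big_set0.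
Qed.

Lemma card_meeting_blocks (I : {set T}) : (#|meeting_blocks I| <= #|I|)%N.
Proof.
rewrite -!sum1_card [X in (_ <= X)%N](@big_setI_meeting_blocks _ _ _ I) leq_sum // => J.
by rewrite inE sum1_card card_gt0 => /andP[].
Qed.

Lemma bigcup_meeting_blocks (I : {set T}) :
  \bigcup_(J in meeting_blocks I) (I :&: J) = I.
Proof.
apply/setP => i; apply/finset.bigcupP/idP => [[J _ /setIP[]] // | iI].
have /finset.bigcupP[J JQ iJ] : i \in finset.cover Q by rewrite (cover_partition partQ).
by exists J; rewrite !inE ?iI ?JQ //=; apply/set0Pn; exists i; rewrite !inE iI.
Qed.

Lemma prodr_exp_card_setI (V : comPzSemiRingType) (c : V) (I : {set T}) :
  \prod_(J in Q) c ^+ #|I :&: J| = c ^+ #|I|.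
Proof.
by rewrite -prodr_const big_setI_partition; apply: eq_bigr => J _; rewrite prodr_const.
Qed.

Lemma prodr_exp_card_meeting_blocks (V : comPzSemiRingType) (c : V) (I : {set T}) :
  \prod_(J in meeting_blocks I) c ^+ #|I :&: J| = c ^+ #|I|.
Proof.
rewrite -prodr_const big_setI_meeting_blocks; apply: eq_bigr => J _; by rewrite prodr_const.
Qed.

Definition meeting_block (I : {set T}) (p : nat) : {set T} :=
  nth finset.set0 (enum (meeting_blocks I)) p.

Lemma meeting_blockP (I : {set T}) (p : nat) : (p < #|meeting_blocks I|)%N ->
  meeting_block I p \in Q /\ I :&: meeting_block I p != finset.set0.
Proof.
by rewrite cardE => lt_p; move: (mem_nth finset.set0 lt_p); rewrite mem_enum inE => /andP.
Qed.

Lemma meeting_block_inj (I : {set T}) (p q : nat) :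
  (p < #|meeting_blocks I|)%N -> (q < #|meeting_blocks I|)%N -> p != q ->
  meeting_block I p != meeting_block I q.
Proof. by rewrite !cardE => lt_p lt_q; rewrite /meeting_block nth_uniq ?enum_uniq. Qed.

End BigPartition.

Lemma prodr_exp_card_partition (V : comPzSemiRingType) (T : finType) (s : seq {set T}) (c : V) :
  uniq s -> finset.partition [set I in s] [set: T] -> \prod_(I <- s) c ^+ #|I| = c ^+ #|T|.
Proof.
move=> s_uniq s_part; rewrite big_uniq //= -cardsT -prodr_const.
rewrite (set_partition_big _ s_part); apply: eq_big => [I | I _]; first by rewrite inE.
by rewrite prodr_const.
Qed.

Lemma big_nth_enum (T : finType) (S : {pred T}) (n : nat) (x0 : T)
    (V : Type) (idx : V) (op : Monoid.com_law idx) (F : T -> V) :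
  size (enum S) = n -> \big[op/idx]_(p < n) F (nth x0 (enum S) p) = \big[op/idx]_(x in S) F x.
Proof.
by move=> <-; rewrite -(big_mkord xpredT (fun p => F (nth x0 _ p))) -(big_nth x0 xpredT F) big_enum.
Qed.

Lemma normr_prodB_le (V : numDomainType) (T : Type) (s : seq T) (a b w : T -> V) (e : V) :
  (forall I, `|a I| <= w I) -> (forall I, `|b I| <= w I) ->
  (forall I, `|a I - b I| <= e * w I) ->
  `|\prod_(I <- s) a I - \prod_(I <- s) b I| <= (size s)%:R * e * \prod_(I <- s) w I.
Proof.
move=> le_a le_b le_ab; elim: s => [|I s IHs]; first by rewrite !big_nil subrr normr0 !mul0r.
have le_bs : `|\prod_(J <- s) b J| <= \prod_(J <- s) w J.
  by rewrite normr_prod; apply: ler_prod => J _; rewrite normr_ge0 le_b.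
rewrite !big_cons /=.
have -> : a I * \prod_(J <- s) a J - b I * \prod_(J <- s) b J =
    a I * (\prod_(J <- s) a J - \prod_(J <- s) b J) + (a I - b I) * \prod_(J <- s) b J by ring.
have -> : (size s).+1%:R * e * (w I * \prod_(J <- s) w J) =
    w I * ((size s)%:R * e * \prod_(J <- s) w J) + e * w I * \prod_(J <- s) w J.
  by rewrite -addn1 natrD; ring.
apply: le_trans (ler_normD _ _) (lerD _ _); rewrite normrM; exact: ler_pM.
Qed.

Lemma exists_uniform_const (V : numDomainType) (n : nat) (Pk : nat -> V -> Prop) :
  (forall k C C', 0 <= C <= C' -> Pk k C -> Pk k C') ->
  (forall k, (k <= n)%N -> exists2 C, 0 <= C & Pk k C) ->
  exists2 C, 0 <= C & forall k, (k <= n)%N -> Pk k C.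
Proof.
move=> mono; elim: n => [|n IHn] ex_C.
  by have [C C0 PC] := ex_C 0%N isT; exists C => // -[].
have [C1 C10 PC1] := IHn (fun k kn => ex_C k (leqW kn)).
have [C2 C20 PC2] := ex_C n.+1 (leqnn _).
exists (C1 + C2) => [|k]; first exact: addr_ge0.
rewrite leq_eqVlt ltnS => /orP[/eqP -> | kn].
  by apply: mono PC2; rewrite C20 lerDr.
by apply: mono (PC1 k kn); rewrite C10 lerDl.
Qed.

Lemma mindist_gt (R : realType) (G : groupType) (d : G -> G -> R) (k : nat)
    (g : 'I_k.+2 -> G) (beta : R) :
  (forall p q, p != q -> beta < d (g p) (g q)) -> beta < mindist d g.
Proof.
move=> sep; apply: (big_ind (fun x => beta < x)) => [||[p q] /= //]; last exact: sep.
- by apply: sep; rewrite -(inj_eq val_inj).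
- by move=> x y ltx lty; rewrite lt_min ltx lty.
Qed.

Lemma in_Delta_representatives (R : realType) (G : groupType) (d : G -> G -> R)
    (r m : nat) (Q : {set {set 'I_r}}) (h : 'I_r -> G) (alpha beta : R) (I : {set 'I_r}) :
  in_Delta d Q alpha beta h -> #|meeting_blocks Q I| = m.+2 ->
  exists j : 'I_m.+2 -> 'I_r,
    [/\ forall p : 'I_m.+2, j p \in I :&: meeting_block Q I p,
        forall (p : 'I_m.+2) i, i \in I :&: meeting_block Q I p -> d (h i) (h (j p)) <= alpha &
        beta < mindist d (fun p => h (j p))].
Proof.
move=> [Din Dsep] card_T.
have JQ (p : 'I_m.+2) : meeting_block Q I p \in Q /\ I :&: meeting_block Q I p != finset.set0.
  by apply: meeting_blockP; rewrite card_T ltn_ord.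
have /fin_all_exists[j jJ] : forall p : 'I_m.+2, exists i, i \in I :&: meeting_block Q I p.
  by move=> p; apply/set0Pn; case: (JQ p).
exists j; split => [//|p i /setIP[_ iJ]|].
  by have /setIP[_ jJp] := jJ p; apply: Din iJ jJp; case: (JQ p).
apply: mindist_gt => p q pq; have /setIP[_ jpJ] := jJ p; have /setIP[_ jqJ] := jJ q.
by apply: Dsep jpJ jqJ; rewrite ?(proj1 (JQ _)) // meeting_block_inj ?card_T ?ltn_ord.
Qed.

Local Open Scope classical_set_scope.

Section Action.
Variables (R : realType) (G : groupType) (dX : measure_display) (X : measurableType dX).
Variables (P : probability X R) (act : G -> X -> X).
Hypothesis act_mp : mp_action P act.

Lemma hactM (g g' : G) (F : X -> R) : hact act g (hact act g' F) = hact act (g * g')%g F.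
Proof. by case: act_mp => _ actM _ _; apply/funext => x; rewrite /hact invgM actM. Qed.

Lemma hact_ae_bound (g : G) (F : X -> R) (B : R) :
  {ae P, forall x, `|F x| <= B} -> {ae P, forall x, `|hact act g F x| <= B}.
Proof.
case: act_mp => _ _ act_meas act_pres [N0 [mN0 PN0 sub]].
exists (act (g^-1)%g @^-1` N0); split => [||x /= Hx]; last exact: sub.
- by rewrite -[X in measurable X]setTI; apply: act_meas.
- by rewrite act_pres.
Qed.

Lemma is_Linfty_hact (g : G) (F : X -> R) : is_Linfty P F -> is_Linfty P (hact act g F).
Proof.
case=> mF [M FM]; split; last by exists M; exact: hact_ae_bound.
by case: act_mp => _ _ act_meas _; apply: measurableT_comp.
Qed.

Lemma is_Linfty_integrable (F : X -> R) : is_Linfty P F -> P.-integrable setT (EFin \o F).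
Proof.
move=> [mF [M FM]]; apply/integrableP; split; first exact/measurable_EFinP.
apply: le_lt_trans (_ : (`|M|%:E * P setT < +oo)%E); last by rewrite probability_setT mule1 ltry.
apply: integral_le_bound => //; first exact/measurable_EFinP.
by apply: filterS FM => x /= Fx _; rewrite lee_fin (le_trans Fx) ?ler_norm.
Qed.

Lemma abs_mu_le (F : X -> R) (B : R) :
  measurable_fun setT F -> 0 <= B -> {ae P, forall x, `|F x| <= B} -> `|mu P F| <= B.
Proof.
move=> mF B0 FB.
have : (`|\int[P]_x (F x)%:E| <= B%:E)%E.
  apply: le_trans (le_abse_integral _ _ _) _ => //; first exact/measurable_EFinP.
  apply: le_trans (_ : (B%:E * P setT <= B%:E)%E); last by rewrite probability_setT mule1.
  apply: integral_le_bound => //; first exact/measurable_EFinP.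
  by apply: filterS FB => x /= Fx _; rewrite lee_fin.
by rewrite /mu; case: (\int[P]_x (F x)%:E)%E.
Qed.

Lemma mu_hact (g : G) (F : X -> R) : is_Linfty P F -> mu P (hact act g F) = mu P F.
Proof.
move=> FLinfty; have [_ _ act_meas act_pres] := act_mp.
have mF : measurable_fun setT (EFin \o F) by apply/measurable_EFinP; case: FLinfty.
have := @integral_pushforward _ _ _ _ _ _ (act_meas (g^-1)%g) P setT _ mF _ measurableT.
rewrite preimage_setT /mu /hact => <-; last first.
  by have := is_Linfty_integrable (is_Linfty_hact g FLinfty).
by congr fine; apply: eq_measure_integral => B mB _; exact: act_pres.
Qed.

End Action.

Section Estimates.
Variables (R : realType) (G : groupType) (dX : measure_display) (X : measurableType dX).
Variables (P : probability X R) (act : G -> X -> X) (d : G -> G -> R).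
Variables (A : set (X -> R)) (N : nat -> (X -> R) -> R) (sigma : nat -> R).
Hypotheses (act_mp : mp_action P act) (A_inv : inv_subalgebra P act A).
Hypothesis N_good : good_seminorms P act d A N sigma.
Hypothesis d_linv : left_invariant d.

Lemma N_ge0 (s : nat) (f : X -> R) : (1 <= s)%N -> A f -> 0 <= N s f.
Proof.
move=> s1 Af; have [_ _ A_scale _ _] := A_inv; have [[N_add N_scale] _ _ _ _] := N_good s1.
have f_f0 : f \+ (fun x => -1 * f x) = (fun x => 0 * f x).
  by apply/funext => x /=; rewrite mul0r mulN1r subrr.
have := N_add _ _ Af (A_scale (-1) _ Af).
by rewrite f_f0 !N_scale // normr0 normrN normr1 mul0r mul1r; lra.
Qed.

Lemma N_le_shift (a b : nat) : (1 <= a)%N -> (a <= b)%N ->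
  exists2 c, 0 <= c & forall f, A f -> N a f <= c * N b f.
Proof.
move=> a1 /subnK <-; elim: (b - a)%N => [|j [c c0 Nc]].
  by exists 1 => // f _; rewrite add0n mul1r.
have aj1 : (1 <= j + a)%N by rewrite (leq_trans a1) ?leq_addl.
have [_ [C NC] _ _ _] := N_good aj1.
exists (c * `|C|) => [|f Af]; first exact: mulr_ge0.
apply: le_trans (Nc f Af) _; rewrite -mulrA ler_wpM2l // addSn.
by apply: le_trans (NC f Af) _; rewrite ler_wpM2r ?ler_norm ?N_ge0.
Qed.

Lemma A_prod (I : Type) (l : seq I) (F : I -> X -> R) :
  (0 < size l)%N -> (forall i, A (F i)) -> A (fun x => \prod_(i <- l) F i x).
Proof.
have [_ _ _ A_mul _] := A_inv; elim: l => [//|i [|j l] IHl] _ AF.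
  by rewrite (_ : (fun x => _) = F i) //; apply/funext => x; rewrite big_seq1.
rewrite (_ : (fun x => _) = F i \* fun x => \prod_(k <- j :: l) F k x).
  exact: A_mul (AF i) (IHl isT AF).
by apply/funext => x; rewrite big_cons.
Qed.

Lemma N_prod_le (n t u : nat) : (1 <= t)%N -> (t + n <= u)%N ->
  exists2 K, 0 <= K & forall (I : Type) (l : seq I) (F : I -> X -> R),
    size l = n.+1 -> (forall i, A (F i)) ->
    N t (fun x => \prod_(i <- l) F i x) <= K * \prod_(i <- l) N u (F i).
Proof.
elim: n t => [|n IHn] t t1 tnu.
  have [c c0 Nc] := N_le_shift t1 (leq_trans (leq_addr _ _) tnu).
  exists c => // I [//|i []] // F _ AF.
  by rewrite big_seq1 (_ : (fun x => _) = F i) ?Nc //; apply/funext => x; rewrite big_seq1.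
have tnu' : (t.+1 + n <= u)%N by rewrite addSnnS.
have [K' K'0 NK'] := IHn t.+1 isT tnu'.
have [c c0 Nc] := N_le_shift (isT : (1 <= t.+1)%N) (leq_trans (leq_addr n _) tnu').
have [_ _ _ _ [Cm NCm]] := N_good t1.
exists (`|Cm| * c * K') => [|I [//|i l] F [size_l] AF]; first by rewrite !mulr_ge0.
have A_l : A (fun x => \prod_(j <- l) F j x) by apply: A_prod; rewrite ?size_l.
rewrite (_ : (fun x => _) = F i \* fun x => \prod_(j <- l) F j x); last first.
  by apply/funext => x; rewrite big_cons.
have Ni0 : 0 <= N t.+1 (F i) by rewrite N_ge0.
have Nl0 : 0 <= N t.+1 (fun x => \prod_(j <- l) F j x) by rewrite N_ge0.
rewrite big_cons mulrACA -(mulrA `|Cm|); apply: le_trans (NCm _ _ (AF i) A_l) _.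
apply: (@le_trans _ _ (`|Cm| * N t.+1 (F i) * N t.+1 (fun x => \prod_(j <- l) F j x))).
  by rewrite ler_wpM2r // ler_wpM2r // ler_norm.
by rewrite ler_pM ?mulr_ge0 // ?ler_wpM2l ?Nc ?NK'.
Qed.

Lemma abs_psi_le (s : nat) : (1 <= s)%N ->
  exists2 L, 0 <= L & forall r (h : 'I_r -> G) (f : X -> R) (S : {set 'I_r}),
    A f -> `|psi P act f h S| <= (L * N s f) ^+ #|S|.
Proof.
move=> s1; have [_ _ [C fC] _ _] := N_good s1; have [A_Linfty _ _ _ A_hact] := A_inv.
exists `|C| => // r h f S Af; have Nf0 := N_ge0 s1 Af.
rewrite /psi; case: ifP => [/eqP -> | /negbT S0]; first by rewrite cards0 expr0 normr1.
have fB : {ae P, forall x, forall i, `|hact act (h i) f x| <= `|C| * N s f}.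
  apply: filter_forall => i; apply: hact_ae_bound => //; apply: filterS (fC f Af) => x /= fx.
  by rewrite (le_trans fx) // ler_wpM2r ?ler_norm.
have A_prod_S : A (fun x => \prod_(i in S) hact act (h i) f x).
  rewrite (_ : (fun x => _) = fun x => \prod_(i <- enum S) hact act (h i) f x).
    by apply: A_prod => [|i]; [rewrite -cardE card_gt0 | exact: A_hact].
  by apply/funext => x; rewrite big_enum.
apply: abs_mu_le; [by case: (A_Linfty _ A_prod_S) | by rewrite exprn_ge0 ?mulr_ge0 |].
apply: filterS fB => x /= fx; rewrite normr_prod -prodr_const.
by apply: ler_prod => i _; rewrite normr_ge0 fx.
Qed.

Definition recentre (I : finType) (g : G) (S : {set I}) (h : I -> G) (f : X -> R) : X -> R :=
  fun x => \prod_(i in S) hact act (g^-1 * h i)%g f x.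

Lemma hact_recentre (I : finType) (g : G) (S : {set I}) (h : I -> G) (f : X -> R) :
  hact act g (recentre g S h f) = fun x => \prod_(i in S) hact act (h i) f x.
Proof.
apply/funext => x; rewrite {1}/hact /recentre; apply: eq_bigr => i _.
by rewrite -[in RHS](mulVKg g (h i)) -(hactM act_mp).
Qed.

Lemma recentre_in_A (I : finType) (g : G) (S : {set I}) (h : I -> G) (f : X -> R) :
  S != finset.set0 -> A f -> A (recentre g S h f).
Proof.
move=> S0 Af; have [_ _ _ _ A_hact] := A_inv.
rewrite (_ : recentre _ _ _ _ = fun x => \prod_(i <- enum S) hact act (g^-1 * h i)%g f x).
  by apply: A_prod => [|i]; [rewrite -cardE card_gt0 | exact: A_hact].
by apply/funext => x; rewrite /recentre big_enum.
Qed.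

Lemma N_recentre_le (t s n : nat) : (1 <= t)%N -> (t + n <= s)%N ->
  exists2 K, 0 <= K & forall (I : finType) (g : G) (S : {set I}) (h : I -> G) f alpha,
    A f -> (0 < #|S| <= n)%N -> (forall i, i \in S -> d (h i) g <= alpha) ->
    N t (recentre g S h f) <= K * (expR (sigma s * alpha) * N s f) ^+ #|S|.
Proof.
move=> t1 tns; have s1 : (1 <= s)%N by rewrite (leq_trans t1) ?(leq_trans (leq_addr n t)).
have [Kp Kp0 NKp] : exists2 K, 0 <= K & forall k, (k <= n.-1)%N ->
    forall (I : Type) (l : seq I) (F : I -> X -> R), size l = k.+1 -> (forall i, A (F i)) ->
    N t (fun x => \prod_(i <- l) F i x) <= K * \prod_(i <- l) N s (F i).
  apply: exists_uniform_const => [k C C' /andP[C0 CC'] NC I l F size_l AF | k kn].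
    by rewrite (le_trans (NC I l F size_l AF)) // ler_wpM2r // prodr_ge0 // => i _; rewrite N_ge0.
  by apply: N_prod_le => //; rewrite (leq_trans _ tns) // leq_add2l (leq_trans kn) ?leq_pred.
have [_ _ _ [sigma0 [C NC]] _] := N_good s1; have [_ _ _ _ A_hact] := A_inv.
exists (Kp * (`|C| + 1) ^+ n) => [|I g S h f alpha Af /andP[S0 Sn] Sd]; first by rewrite mulr_ge0.
have -> : recentre g S h f = fun x => \prod_(i <- enum S) hact act (g^-1 * h i)%g f x.
  by apply/funext => x; rewrite /recentre big_enum.
have size_S : size (enum S) = #|S|.-1.+1 by rewrite -cardE prednK.
have Sn' : (#|S|.-1 <= n.-1)%N by rewrite -!subn1 leq_sub2r.
apply: le_trans (NKp _ Sn' _ _ _ size_S (fun i => A_hact _ _ Af)) _.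
rewrite big_enum /= -mulrA ler_wpM2l //.
apply: (@le_trans _ _ (((`|C| + 1) * (expR (sigma s * alpha) * N s f)) ^+ #|S|)).
  rewrite -prodr_const; apply: ler_prod => i iS.
  have Ahi := A_hact (g^-1 * h i)%g _ Af.
  rewrite N_ge0 //=; apply: le_trans (NC _ _ Af) _.
  rewrite mulrA ler_wpM2r ?N_ge0 //.
  apply: le_trans (ler_wpM2r (expR_ge0 _) (ler_norm C)) _.
  apply: ler_pM; rewrite ?expR_ge0 ?lerDl // ler_expR ler_wpM2l ?(ltW sigma0) //.
  by rewrite -(mulVg g) d_linv Sd.
by rewrite exprMn ler_wpM2r ?exprn_ge0 ?mulr_ge0 ?expR_ge0 ?N_ge0 // ler_weXn2l // lerDr.
Qed.


Variables (delta : nat -> R) (sk : nat -> nat).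
Hypothesis mixing : exp_mixing_all_orders P act d A N delta sk.

Lemma exp_mixing_upto (n t : nat) : (1 <= t)%N -> (forall m, (m <= n)%N -> (sk m.+2 < t)%N) ->
  exists2 C, 0 <= C & forall m, (m <= n)%N ->
  forall (f : 'I_m.+2 -> X -> R) (h : 'I_m.+2 -> G), (forall i, A (f i)) ->
  `|mu P (fun x => \prod_(i < m.+2) hact act (h i) (f i) x) - \prod_(i < m.+2) mu P (f i)|
    <= C * expR (- (delta m.+2 * mindist d h)) * \prod_(i < m.+2) N t (f i).
Proof.
move=> t1 sk_t.
have rhs_ge0 m (f : 'I_m.+2 -> X -> R) h : (forall i, A (f i)) ->
    0 <= expR (- (delta m.+2 * mindist d h)) * \prod_(i < m.+2) N t (f i).
  by move=> Af; rewrite mulr_ge0 ?expR_ge0 // prodr_ge0 // => i _; rewrite N_ge0.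
apply: exists_uniform_const => [m C C' /andP[C0 CC'] mixC f h Af | m mn].
  by rewrite (le_trans (mixC f h Af)) // -!mulrA ler_wpM2r ?rhs_ge0.
have [_ _ mix] := mixing m; have [C mixC] := mix t (sk_t m mn).
exists `|C| => // f h Af; apply: le_trans (mixC f h Af) _.
by rewrite -!mulrA ler_wpM2r ?rhs_ge0 ?ler_norm.
Qed.

Lemma psi_eq_psiQ (r : nat) (Q : {set {set 'I_r}}) (h : 'I_r -> G) (f : X -> R) (I : {set 'I_r}) :
  finset.partition Q [set: 'I_r] -> (#|meeting_blocks Q I| <= 1)%N ->
  psi P act f h I = psiQ P act Q f h I.
Proof.
move=> partQ; have cupI := bigcup_meeting_blocks partQ I.
rewrite /psiQ (@big_meeting_blocks _ Q _ _ _ I (psi P act f h)) ?/psi ?eqxx //.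
rewrite leq_eqVlt ltnS leqn0 => /orP[/cards1P[J TJ] | /eqP/cards0_eq T0].
- have IJ : I :&: J = I by rewrite -[RHS]cupI TJ big_set1.
  by rewrite TJ big_set1 IJ.
- have I0 : I = finset.set0 by rewrite -cupI T0 big_set0.
  by rewrite T0 big_set0 I0 eqxx.
Qed.

Section Recentred.
Variables (r m : nat) (Q : {set {set 'I_r}}) (h : 'I_r -> G) (f : X -> R) (I : {set 'I_r}).
Variable c : 'I_m.+2 -> G.
Hypotheses (partQ : finset.partition Q [set: 'I_r]) (card_T : #|meeting_blocks Q I| = m.+2).

Let F (p : 'I_m.+2) := recentre (c p) (I :&: meeting_block Q I p) h f.

Let meetsJ (p : 'I_m.+2) : I :&: meeting_block Q I p != finset.set0.
Proof. by case: (meeting_blockP (_ : (p < #|meeting_blocks Q I|)%N)); rewrite ?card_T. Qed.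

Let size_T : size (enum (meeting_blocks Q I)) = m.+2.
Proof. by rewrite -cardE. Qed.

Lemma psi_recentred :
  psi P act f h I = mu P (fun x => \prod_(p < m.+2) hact act (c p) (F p) x).
Proof.
have I0 : I != finset.set0.
  by apply: contra (meetsJ ord0) => /eqP ->; rewrite finset.set0I.
rewrite /psi (negbTE I0); congr (mu P _); apply/funext => x.
rewrite (big_setI_meeting_blocks partQ) -(@big_nth_enum _ _ _ finset.set0 _ _ _ _ size_T).
by apply: eq_bigr => p _; rewrite /F hact_recentre.
Qed.

Lemma psiQ_recentred : A f -> psiQ P act Q f h I = \prod_(p < m.+2) mu P (F p).
Proof.
move=> Af; have [A_Linfty _ _ _ _] := A_inv.
rewrite /psiQ (@big_meeting_blocks _ Q _ _ _ I (psi P act f h)) ?/psi ?eqxx //.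
rewrite -(@big_nth_enum _ _ _ finset.set0 _ _ _ _ size_T); apply: eq_bigr => p _.
have FA : A (F p) by apply: recentre_in_A; rewrite ?meetsJ.
by rewrite (negbTE (meetsJ p)) -(mu_hact act_mp (c p) (A_Linfty _ FA)) /F hact_recentre.
Qed.

End Recentred.

Hypothesis delta_noninc : forall k, (2 <= k)%N -> delta k.+1 <= delta k.
Hypothesis sk_nondec : forall k, (2 <= k)%N -> (sk k <= sk k.+1)%N.

Lemma delta_le (k n : nat) : (2 <= k <= n)%N -> delta n <= delta k.
Proof.
move=> /andP[k2 /subnK <-]; elim: (n - k)%N => // j IHj.
by rewrite addSn (le_trans _ IHj) // delta_noninc // (leq_trans k2) ?leq_addl.
Qed.

Lemma sk_le (k n : nat) : (2 <= k <= n)%N -> (sk k <= sk n)%N.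
Proof.
move=> /andP[k2 /subnK <-]; elim: (n - k)%N => // j IHj.
by rewrite addSn (leq_trans IHj) // sk_nondec // (leq_trans k2) ?leq_addl.
Qed.

Lemma psi_sub_psiQ_le (r s : nat) : (2 <= r)%N -> (sk r + r < s)%N ->
  exists2 K, 0 <= K & forall alpha beta Q (h : 'I_r -> G) f I,
    0 <= alpha -> alpha < beta -> finset.partition Q [set: 'I_r] ->
    in_Delta d Q alpha beta h -> A f ->
    `|psi P act f h I - psiQ P act Q f h I|
      <= K * expR (- (beta * delta r)) * (expR (sigma s * alpha) * N s f) ^+ #|I|.
Proof.
move=> r2 sk_s; have r_eq : (r - 2)%N.+2 = r by rewrite -addn2 subnK.
have [delta_r0 sk_r0 _] := mixing (r - 2)%N; rewrite r_eq in delta_r0 sk_r0.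
(* Mixing is used at index [t = s - r]: the [r] remaining steps of the seminorm
   index pay for the products of at most [r] functions in [N_recentre_le]. *)
pose t := (s - r)%N; have t1 : (1 <= t)%N by rewrite /t; lia.
have sk_t m : (m <= r - 2)%N -> (sk m.+2 < t)%N.
  by move=> mr; rewrite (@leq_ltn_trans (sk r)) ?sk_le // /t; lia.
have [Cmix Cmix0 mixC] := exp_mixing_upto t1 sk_t.
have tr_s : (t + r <= s)%N by rewrite /t; lia.
have [Krc Krc0 NKrc] := N_recentre_le t1 tr_s.
exists (Cmix * (Krc + 1) ^+ r) => [|alpha beta Q h f I alpha0 alpha_beta partQ hQ Af].
  by rewrite mulr_ge0 ?exprn_ge0 ?addr_ge0.
have Nf0 : 0 <= N s f by rewrite N_ge0 // (leq_trans t1) // /t leq_subr.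
have beta0 : 0 <= beta by rewrite (le_trans alpha0) ?ltW.
case: (leqP #|meeting_blocks Q I| 1) => [T1 | T2].
  rewrite (psi_eq_psiQ h f partQ T1) subrr normr0.
  by rewrite !mulr_ge0 ?exprn_ge0 ?mulr_ge0 ?expR_ge0 ?addr_ge0.
have [m card_T] : exists m, #|meeting_blocks Q I| = m.+2.
  by exists (#|meeting_blocks Q I| - 2)%N; lia.
have m_r : (m <= r - 2)%N.
  by have := card_meeting_blocks partQ I; have := max_card I; rewrite card_ord card_T; lia.
have [j [jJ j_near j_far]] := in_Delta_representatives hQ card_T.
pose c p := h (j p); set J := meeting_block Q I.
have IJ0 (p : 'I_m.+2) : I :&: J p != finset.set0 by apply/set0Pn; exists (j p).
have AF (p : 'I_m.+2) : A (recentre (c p) (I :&: J p) h f) by exact: recentre_in_A.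
rewrite (psi_recentred h f c partQ card_T) (psiQ_recentred h c card_T Af).
apply: le_trans (mixC m m_r _ c AF) _.
set W := (expR (sigma s * alpha) * N s f) ^+ #|I|.
apply: (@le_trans _ _ (Cmix * expR (- (beta * delta r)) * ((Krc + 1) ^+ r * W))); last first.
  by rewrite mulrA (mulrAC Cmix).
apply: ler_pM.
- by rewrite mulr_ge0 ?expR_ge0.
- by apply: prodr_ge0 => p _; rewrite N_ge0.
- rewrite ler_wpM2l // ler_expR lerN2 mulrC ler_pM ?(ltW delta_r0) ?(ltW j_far) //.
  by rewrite -[X in delta X]r_eq delta_le.
apply: (@le_trans _ _ (\prod_(p < m.+2) (Krc * (expR (sigma s * alpha) * N s f) ^+ #|I :&: J p|))).
  apply: ler_prod => p _; rewrite N_ge0 //=; apply: NKrc => //; last exact: j_near.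
  by rewrite card_gt0 IJ0 -[X in (_ <= X)%N](card_ord r) max_card.
have size_T : size (enum (meeting_blocks Q I)) = m.+2 by rewrite -cardE.
rewrite big_split /= prodr_const card_ord /J /meeting_block.
rewrite (@big_nth_enum _ _ _ finset.set0 _ _ _
  (fun J => (expR (sigma s * alpha) * N s f) ^+ #|I :&: J|) size_T).
rewrite prodr_exp_card_meeting_blocks // ler_wpM2r ?exprn_ge0 ?mulr_ge0 ?expR_ge0 //.
apply: (@le_trans _ _ ((Krc + 1) ^+ m.+2)); first by rewrite lerXn2r ?nnegrE ?addr_ge0 ?lerDl.
by rewrite ler_weXn2l ?lerDr //; lia.
Qed.

Lemma psit_sub_psitQ_le (r s : nat) : (2 <= r)%N -> (sk r + r < s)%N ->
  exists2 C, 0 <= C & forall alpha beta Q (h : 'I_r -> G) f Ps,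
    0 <= alpha -> alpha < beta -> finset.partition Q [set: 'I_r] ->
    in_Delta d Q alpha beta h -> A f -> cyc_ord_partition Ps ->
    `|psit P act f h Ps - psitQ P act Q f h Ps|
      <= C * expR (- (beta * delta r)) * (expR (sigma s * alpha) * N s f) ^+ r.
Proof.
move=> r2 sk_s; have s1 : (1 <= s)%N by lia.
have [K K0 diff_le] := psi_sub_psiQ_le r2 sk_s; have [L L0 psi_le] := abs_psi_le s1.
exists (#|{set 'I_r}|%:R * K * (L + 1) ^+ r); first by rewrite !mulr_ge0 ?exprn_ge0 ?addr_ge0.
move=> alpha beta Q h f Ps alpha0 alpha_beta partQ hQ Af /andP[Ps_uniq Ps_part].
set e := expR (sigma s * alpha).
have Nf0 := N_ge0 s1 Af; have e0 : 0 <= e := expR_ge0 _.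
have e1 : 1 <= e by rewrite -expR0 ler_expR mulr_ge0 // ltW //; case: (N_good s1) => _ _ _ [].
pose w (I : {set 'I_r}) := ((L + 1) * (e * N s f)) ^+ #|I|.
have psi_w I : `|psi P act f h I| <= w I.
  rewrite (le_trans (psi_le _ h f I Af)) // lerXn2r ?nnegrE ?mulr_ge0 ?addr_ge0 //.
  by apply: ler_pM; rewrite ?lerDl ?ler_peMl.
have psiQ_w I : `|psiQ P act Q f h I| <= w I.
  rewrite /psiQ normr_prod /w -(prodr_exp_card_setI partQ); apply: ler_prod => J _.
  by rewrite normr_ge0 psi_w.
have diff_w I : `|psi P act f h I - psiQ P act Q f h I| <= K * expR (- (beta * delta r)) * w I.
  rewrite (le_trans (diff_le _ _ _ _ _ _ alpha0 alpha_beta partQ hQ Af)) //.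
  rewrite ler_wpM2l ?mulr_ge0 ?expR_ge0 // lerXn2r ?nnegrE ?mulr_ge0 ?addr_ge0 //.
  by rewrite ler_peMl ?mulr_ge0 ?lerDr.
apply: le_trans (normr_prodB_le Ps psi_w psiQ_w diff_w) _.
rewrite /w prodr_exp_card_partition // card_ord exprMn mulrA ler_wpM2r ?exprn_ge0 ?mulr_ge0 //.
rewrite mulrA (mulrAC (_ * K)) !ler_wpM2r ?expR_ge0 ?exprn_ge0 ?addr_ge0 //.
by rewrite ler_nat -(card_uniqP Ps_uniq) max_card.
Qed.

End Estimates.

Theorem proposition7p2
  (R : realType) (H : groupType) (d : H -> H -> R)
  (dX : measure_display) (X : measurableType dX) (P : probability X R)
  (act : H -> X -> X) (A : set (X -> R)) (N : nat -> (X -> R) -> R)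
  (delta : nat -> R) (sk : nat -> nat) (sigma : nat -> R) :
  is_metric d -> left_invariant d ->
  mp_action P act ->
  inv_subalgebra P act A ->
  good_seminorms P act d A N sigma ->
  exp_mixing_all_orders P act d A N delta sk ->
  constants_ok delta sk sigma ->
  forall r : nat, (3 <= r)%N ->
  forall s : nat, (sk r + r < s)%N ->
  exists C : R,
  forall alpha beta : R, 0 <= alpha -> alpha < beta ->
  forall Q : {set {set 'I_r}}, finset.partition Q [set: 'I_r] ->
  forall h : 'I_r -> H, in_Delta d Q alpha beta h ->
  forall f : X -> R, A f ->
  forall Ps : seq {set 'I_r}, cyc_ord_partition Ps ->
  `| psit P act f h Ps - psitQ P act Q f h Ps |
    <= C * expR (- (beta * delta r - r%:R * alpha * sigma s)) * N s f ^+ r.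
Proof.
move=> _ d_linv act_mp A_inv N_good mixing [_ sk_nondec delta_noninc _] r r3 s sk_s.
have [C _ psit_le] := psit_sub_psitQ_le act_mp A_inv N_good d_linv mixing
  delta_noninc sk_nondec (ltnW r3) sk_s.
exists C => alpha beta alpha0 alpha_beta Q partQ h hQ f Af Ps Ps_part.
apply: le_trans (psit_le _ _ _ _ _ _ alpha0 alpha_beta partQ hQ Af Ps_part) _.
rewrite exprMn mulrA -(mulrA C) -expRM_natl -expRD.
by have -> : - (beta * delta r) + r%:R * (sigma s * alpha) =
  - (beta * delta r - r%:R * alpha * sigma s) by ring.
Qed.
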